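(* Fix $(\varepsilon,\delta)\in(0,1)\times(0,\delta_0]$ and suppose $\mathcal R^\ast(\varepsilon,\delta|p_{X_1X_2},p_{K_1K_2})\neq\emptyset$. Then for every $\gamma>0$ there exists $n_0=n_0(\gamma)$ such that for all $n\ge n_0$, $$H(X_i|X_{3-i})\le H(K_i)+\gamma+\zeta_n(\gamma,\varepsilon,\delta),\quad i=1,2,$$ $$H(X_1X_2)\le H(K_1K_2)+\gamma+\zeta_n(\gamma,\varepsilon,\delta).$$
   Context: All logarithms are base 2. $\mathcal X_1,\mathcal X_2$ are finite fields. $(X_1,X_2)$ has joint pmf $p_{X_1X_2}$ on $\mathcal X_1\times\mathcal X_2$ and $(K_1,K_2)$ has joint pmf $p_{K_1K_2}$ on $\mathcal X_1\times\mathcal X_2$. For block length $n$, $(\mathbf X_1,\mathbf X_2)$ is i.i.d. with law $p^n_{X_1X_2}$ (source), $(\mathbf K_1,\mathbf K_2)$ is i.i.d. with law $p^n_{K_1K_2}$ (keys), and the keys are independent of the sources. A distributed source encryption system at block length $n$ consists of finite sets $\mathcal C_i^{(n)}$, encryption maps $\Phi_i^{(n)}:\mathcal X_i^n\times\mathcal X_i^n\to\mathcal C_i^{(n)}$ (key, plaintext) and a decryption map $\Psi^{(n)}:\mathcal X_1^n\times\mathcal X_2^n\times\mathcal C_1^{(n)}\times\mathcal C_2^{(n)}\to\mathcal X_1^n\times\mathcal X_2^n$, such that there exist maps $\phi_i^{(n)}:\mathcal X_i^n\to\mathcal M_i^{(n)}$ (finite $\mathcal M_i^{(n)}$) and $\psi^{(n)}$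 with $\Psi^{(n)}(\mathbf k_1,\mathbf k_2,\Phi_1^{(n)}(\mathbf k_1,\mathbf x_1),\Phi_2^{(n)}(\mathbf k_2,\mathbf x_2))=\psi^{(n)}(\phi_1^{(n)}(\mathbf x_1),\phi_2^{(n)}(\mathbf x_2))$ for all keys and plaintexts. Ciphertexts: $C_i^{(n)}=\Phi_i^{(n)}(\mathbf K_i,\mathbf X_i)$. Correct decoding set $\mathcal D^{(n)}:=\{(\mathbf x_1,\mathbf x_2):\psi^{(n)}(\phi_1^{(n)}(\mathbf x_1),\phi_2^{(n)}(\mathbf x_2))=(\mathbf x_1,\mathbf x_2)\}$; error probability $p_{\rm e}:=\Pr[(\mathbf X_1,\mathbf X_2)\notin\mathcal D^{(n)}]$. Fix a constant $\delta_0>0$. For $(\varepsilon,\delta)\in(0,1)\times[0,\delta_0]$, $(R_1,R_2)$ is an $(\varepsilon,\delta)$-reliable and secure rate pair if there is a sequence of systems $\{(\Phi_1^{(n)},\Phi_2^{(n)},\Psi^{(n)})\}_{n\ge1}$ such that for every $\gamma>0$ there is $n_0$ with, for all $n\ge n_0$: $\frac1n\log|\mathcal C_i^{(n)}|\le R_i+\gamma$ ($i=1,2$), $p_{\rm e}\le\varepsilon$, and $I(C_1^{(n)}C_2^{(n)};\mathbf X_1\mathbf X_2)\le\delta$. $\mathcal R^\ast(\varepsilon,\delta|p_{X_1X_2},p_{K_1K_2})$ is the set of such pairs. For $\gamma>0$ let $\tilde{\mathcal A}^{(n)}_\gamma$ be the set of $(\mathbf x_1,\mathbf x_2)\in\mathcal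 X_1^n\times\mathcal X_2^n$ with $\bigl|\frac1n\log\frac1{p^n_{X_i|X_{3-i}}(\mathbf x_i|\mathbf x_{3-i})}-H(X_i|X_{3-i})\bigr|\le\gamma$ for $i=1,2$ and $\bigl|\frac1n\log\frac1{p^n_{X_1X_2}(\mathbf x_1,\mathbf x_2)}-H(X_1X_2)\bigr|\le\gamma$. Set $\nu_n(\gamma):=p^n_{X_1X_2}((\tilde{\mathcal A}^{(n)}_\gamma)^c)$, $\nu_n(\gamma,\varepsilon):=\nu_n(\gamma)+\varepsilon$, and $\zeta_n(\gamma,\varepsilon,\delta):=\frac1n\Bigl[\frac{\delta}{1-\nu_n(\gamma,\varepsilon)}+\log\frac1{1-\nu_n(\gamma,\varepsilon)}\Bigr]$. *)

From HB Require Import structures.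
From mathcomp Require Import all_boot all_order all_algebra.
From mathcomp Require Import reals exp.
Set Implicit Arguments. Unset Strict Implicit. Unset Printing Implicit Defensive.
Import Order.TTheory GRing.Theory Num.Theory.
Local Open Scope ring_scope.

Section Defs.
Variable R : realType.

Definition log2 (x : R) : R := ln x / ln 2.

Definition is_pmf (T : finType) (p : T -> R) : Prop :=
  (forall t, 0 <= p t) /\ \sum_(t : T) p t = 1.

Definition marg1 (A B : finType) (p : A * B -> R) (a : A) : R := \sum_(b : B) p (a, b).
Definition marg2 (A B : finType) (p : A * B -> R) (b : B) : R := \sum_(a : A) p (a, b).

(* Shannon entropy (convention 0 log 0 = 0 is automatic since 0 * _ = 0) *)
Definition entropy (T : finType) (p : T -> R) : R := - \sum_(t : T) p t * log2 (p t).

(* H(X1|X2) and H(X2|X1) for a joint pmf p on X1 * X2 *)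
Definition centropy12 (A B : finType) (p : A * B -> R) : R :=
  - \sum_(ab : A * B) p ab * log2 (p ab / marg2 p ab.2).
Definition centropy21 (A B : finType) (p : A * B -> R) : R :=
  - \sum_(ab : A * B) p ab * log2 (p ab / marg1 p ab.1).

Definition minfo (A B : finType) (P : A * B -> R) : R :=
  \sum_(ab : A * B) P ab * log2 (P ab / (marg1 P ab.1 * marg2 P ab.2)).

Definition sq (T : finType) (n : nat) := {ffun 'I_n -> T}.

Definition pn (T : finType) (p : T -> R) (n : nat) (x : sq T n) : R :=
  \prod_(i < n) p (x i).
Definition pjn (A B : finType) (p : A * B -> R) (n : nat) (x : sq A n * sq B n) : R :=
  \prod_(i < n) p (x.1 i, x.2 i).

Arguments pn {T} p n x.
Arguments pjn {A B} p n x.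

(* distributed source encryption system at block length n;
   Phi_i takes (key, plaintext) *)
Record system (X1 X2 : finType) (n : nat) := System {
  C1 : finType; C2 : finType; M1 : finType; M2 : finType;
  Phi1 : sq X1 n -> sq X1 n -> C1;
  Phi2 : sq X2 n -> sq X2 n -> C2;
  Psi : sq X1 n -> sq X2 n -> C1 -> C2 -> sq X1 n * sq X2 n;
  phi1 : sq X1 n -> M1;
  phi2 : sq X2 n -> M2;
  psi : M1 -> M2 -> sq X1 n * sq X2 n;
  factor : forall k1 k2 x1 x2,
    Psi k1 k2 (Phi1 k1 x1) (Phi2 k2 x2) = psi (phi1 x1) (phi2 x2) }.
Arguments C1 {X1 X2 n} s.
Arguments C2 {X1 X2 n} s.
Arguments M1 {X1 X2 n} s.
Arguments M2 {X1 X2 n} s.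
Arguments Phi1 {X1 X2 n} s _ _.
Arguments Phi2 {X1 X2 n} s _ _.
Arguments Psi {X1 X2 n} s _ _ _ _.
Arguments phi1 {X1 X2 n} s _.
Arguments phi2 {X1 X2 n} s _.
Arguments psi {X1 X2 n} s _ _.

Variables (X1 X2 : finType).

Definition perr (p : X1 * X2 -> R) (n : nat) (S : system X1 X2 n) : R :=
  \sum_(x : sq X1 n * sq X2 n | psi S (phi1 S x.1) (phi2 S x.2) != x) pjn p n x.

(* joint law of ((C1,C2),(X1,X2)), keys independent of sources *)
Definition cipher_joint (p q : X1 * X2 -> R) (n : nat) (S : system X1 X2 n)
    (cx : (C1 S * C2 S) * (sq X1 n * sq X2 n)) : R :=
  pjn p n cx.2 *
  \sum_(k : sq X1 n * sq X2 n)
     pjn q n k * ((Phi1 S k.1 cx.2.1 == cx.1.1) && (Phi2 S k.2 cx.2.2 == cx.1.2) : nat)%:R.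

Definition leakage (p q : X1 * X2 -> R) (n : nat) (S : system X1 X2 n) : R :=
  minfo (@cipher_joint p q n S).

Definition rate_region (p q : X1 * X2 -> R) (eps delta : R) (R1 R2 : R) : Prop :=
  exists sys : forall n : nat, system X1 X2 n,
    forall gamma : R, 0 < gamma -> exists n0 : nat, forall n : nat, (n0 <= n)%N ->
      [/\ n%:R^-1 * log2 (#|C1 (sys n)|%:R) <= R1 + gamma,
          n%:R^-1 * log2 (#|C2 (sys n)|%:R) <= R2 + gamma,
          perr p (sys n) <= eps &
          leakage p q (sys n) <= delta].

Definition typical (p : X1 * X2 -> R) (n : nat) (gamma : R) (x : sq X1 n * sq X2 n) : bool :=
  [&& `| n%:R^-1 * log2 (1 / (pjn p n x / pn (marg2 p) n x.2)) - centropy12 p | <= gamma,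
      `| n%:R^-1 * log2 (1 / (pjn p n x / pn (marg1 p) n x.1)) - centropy21 p | <= gamma &
      `| n%:R^-1 * log2 (1 / pjn p n x) - entropy p | <= gamma].

Definition nu (p : X1 * X2 -> R) (n : nat) (gamma : R) : R :=
  \sum_(x : sq X1 n * sq X2 n | ~~ typical p gamma x) pjn p n x.

Definition nu_eps (p : X1 * X2 -> R) (n : nat) (gamma eps : R) : R := nu p n gamma + eps.

Definition zeta (p : X1 * X2 -> R) (n : nat) (gamma eps delta : R) : R :=
  n%:R^-1 * (delta / (1 - nu_eps p n gamma eps) + log2 (1 / (1 - nu_eps p n gamma eps))).

End Defs.

(* Fix a block length at which the error probability is at most eps and the
   leakage I(C; X) at most delta.  On the set A of jointly typical, correctly
   decoded source sequences, whose probability a is at least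
   1 - nu_n(gamma, eps) by Chebyshev's inequality, the ciphertext together
   with the key part K_i and the other source component (or with the whole key)
   determines the plaintext.  Comparing the joint law of plaintext and
   ciphertext with the product of the ciphertext law, the side-information law
   and the key-part law through ln y <= y - 1, this injectivity yields
     a ln a + sum_{x in A} P(x) ln (P_side(x) / P(x)) - a n H(K) ln 2
       <= I(C; X) ln 2.
   Typicality bounds ln (P_side(x) / P(x)) below by n (H - gamma) ln 2 for the
   relevant source entropy H, and solving for H gives the bound with zeta_n. *)

From mathcomp Require Import all_boot all_order all_algebra.
From mathcomp Require Import reals exp ring lra.
Set Implicit Arguments. Unset Strict Implicit. Unset Printing Implicit Defensive.
Import Order.TTheory GRing.Theory Num.Theory.
Local Open Scope ring_scope.

Section RealFacts.
Variable R : realType.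

Lemma ln_le_subr1 (x : R) : 0 < x -> ln x <= x - 1.
Proof.
by move=> x0; have := @le_ln1Dx R (x - 1); rewrite addrCA subrr addr0; apply; lra.
Qed.

Lemma ln_prod n (F : 'I_n -> R) : (forall i, 0 < F i) ->
  ln (\prod_(i < n) F i) = \sum_(i < n) ln (F i).
Proof.
move=> F0.
suff : 0 < \prod_(i < n) F i /\ ln (\prod_(i < n) F i) = \sum_(i < n) ln (F i) by case.
apply: (big_rec2 (fun a b => 0 < a /\ ln a = b)); first by rewrite ln1.
by move=> i a b _ [a0 <-]; split; [rewrite mulr_gt0 | rewrite lnM ?posrE].
Qed.

Lemma prodr_gt0_factor n (F : 'I_n -> R) : (forall i, 0 <= F i) ->
  0 < \prod_(i < n) F i -> forall i, 0 < F i.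
Proof.
move=> F0 Fpos i; rewrite lt_neqAle F0 andbT; apply/eqP => Fi0.
by move: Fpos; rewrite (bigD1 i) //= -Fi0 mul0r ltxx.
Qed.

Lemma ln2_gt0 : 0 < ln 2 :> R.
Proof. by apply: ln_gt0; lra. Qed.

Lemma le_entropy_of_ln_ineq (a b nn d H Hk g : R) :
  0 < b -> b <= a -> 0 < nn -> 0 <= d ->
  a * ln a + a * (nn * ln 2 * (H - g)) + a * - (nn * ln 2 * Hk) <= ln 2 * d ->
  H <= Hk + g + nn^-1 * (d / b + log2 (1 / b)).
Proof.
move=> b0 ba nn0 d0 ineq.
have a0 : 0 < a := lt_le_trans b0 ba.
have L0 := ln2_gt0.
set u := nn * ln 2 * (H - g - Hk).
have h1 : u + ln a <= ln 2 * d / a.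
  rewrite ler_pdivlMr //; apply: le_trans ineq.
  by have -> : (u + ln a) * a = a * ln a + a * (nn * ln 2 * (H - g)) + a * - (nn * ln 2 * Hk)
    by rewrite /u; ring.
have h2 : ln 2 * d / a <= ln 2 * d / b.
  by apply: ler_wpM2l; [exact: mulr_ge0 (ltW L0) d0 | rewrite lef_pV2 ?posrE].
have h3 : ln b <= ln a by rewrite ler_ln ?posrE.
have -> : nn^-1 * (d / b + log2 (1 / b)) = (ln 2 * d / b - ln b) / (nn * ln 2).
  by rewrite /log2 div1r lnV ?posrE //; field; rewrite !gt_eqF.
have : H - g - Hk <= (ln 2 * d / b - ln b) / (nn * ln 2).
  rewrite ler_pdivlMr ?mulr_gt0 //.
  have -> : (H - g - Hk) * (nn * ln 2) = u by rewrite /u; ring.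
  lra.
lra.
Qed.

End RealFacts.

Section ProductCoordinates.
Variable R : realType.

(* [ev] identifies [Y] with the sequences ['I_n -> T] as far as sums of
   products are concerned; this is all that is used of the i.i.d. structure. *)
Definition product_coords (Y T : finType) n (ev : Y -> 'I_n -> T) :=
  forall F : 'I_n -> T -> R,
    \sum_(y : Y) \prod_(i < n) F i (ev y i) = \prod_(i < n) \sum_(t : T) F i t.

Lemma product_coords_seq (T : finType) n :
  product_coords (fun (y : sq T n) i => y i).
Proof. by move=> F; rewrite bigA_distr_bigA. Qed.

Lemma product_coords_pair (A B : finType) n :
  product_coords (fun (y : sq A n * sq B n) i => (y.1 i, y.2 i)).
Proof.
move=> F; rewrite -(pair_bigA _ (fun (f : sq A n) (g : sq B n) => \prod_(i < n) F i (f i, g i))) /=.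
under eq_bigr => f _ do rewrite -(bigA_distr_bigA (fun i b => F i (f i, b))).
rewrite -(bigA_distr_bigA (fun i a => \sum_b F i (a, b))).
apply: eq_bigr => i _; rewrite (pair_bigA _ (fun a b => F i (a, b))).
by apply: eq_bigr => -[].
Qed.

End ProductCoordinates.

Section IidLaw.
Variables (R : realType) (Y T : finType) (n : nat) (ev : Y -> 'I_n -> T).
Hypothesis coords : product_coords R ev.
Variable p : T -> R.
Hypotheses (p0 : forall t, 0 <= p t) (p1 : \sum_t p t = 1).

Definition iid_law (y : Y) : R := \prod_(i < n) p (ev y i).

Lemma iid_law_ge0 y : 0 <= iid_law y.
Proof. by apply: prodr_ge0 => i _. Qed.

Lemma sum_iid_law : \sum_y iid_law y = 1.
Proof. by rewrite /iid_law (coords (fun _ t => p t)) big1 // => i _; rewrite p1. Qed.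

Lemma iid_law_ln y : 0 < iid_law y ->
  ln (iid_law y) = \sum_(i < n) ln (p (ev y i)).
Proof. by move=> y0; rewrite ln_prod //; apply: prodr_gt0_factor y0 => i. Qed.

Lemma sum_iid_law_ln :
  \sum_y iid_law y * ln (iid_law y) = n%:R * \sum_t p t * ln (p t).
Proof.
(* [iid_law y * ln (iid_law y)] is a sum of products, to which [coords] applies. *)
pose F (j l : 'I_n) t := if l == j then p t * ln (p t) else p t.
have FE y : iid_law y * ln (iid_law y) = \sum_(j < n) \prod_(l < n) F j l (ev y l).
  have Fj j : \prod_(l < n) F j l (ev y l) = iid_law y * ln (p (ev y j)).
    rewrite /iid_law (bigD1 j) //= [in RHS](bigD1 j) //= /F eqxx.
    rewrite (eq_bigr (fun l => p (ev y l))); last by move=> l /negbTE ->.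
    by rewrite mulrAC.
  under [RHS]eq_bigr => j _ do rewrite Fj.
  rewrite -mulr_sumr; have := iid_law_ge0 y.
  by rewrite le0r => /predU1P[->|y0]; rewrite ?mul0r // iid_law_ln.
under eq_bigr => y _ do rewrite FE.
rewrite exchange_big /=.
transitivity (\sum_(j < n) \sum_t p t * ln (p t)); last by rewrite sumr_const card_ord mulr_natl.
apply: eq_bigr => j _; rewrite coords (bigD1 j) //= /F eqxx.
by rewrite [X in _ * X]big1 ?mulr1 // => l /negbTE ->.
Qed.

Lemma log2_inv_iid_ratio (r : T -> R) y : (forall t, p t <= r t) -> 0 < iid_law y ->
  log2 (1 / (iid_law y / \prod_(i < n) r (ev y i))) =
  \sum_(i < n) - log2 (p (ev y i) / r (ev y i)).
Proof.
move=> pr y0.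
have pi i : 0 < p (ev y i) by apply: prodr_gt0_factor y0 i.
have ri i : 0 < r (ev y i) by apply: lt_le_trans (pi i) (pr _).
rewrite div1r invf_div /log2 ln_div ?posrE ?prodr_gt0 // iid_law_ln // ln_prod //.
by rewrite -sumrB mulr_suml; apply: eq_bigr => i _; rewrite ln_div ?posrE //; ring.
Qed.

Variable g : T -> R.

Definition mean := \sum_t p t * g t.
Definition centered t := g t - mean.
Definition variance := \sum_t p t * centered t ^+ 2.

Lemma iid_cross_moment (i j : 'I_n) :
  \sum_y iid_law y * (centered (ev y i) * centered (ev y j)) =
  if i == j then variance else 0.
Proof.
pose F l t := p t * ((if l == i then centered t else 1) * (if l == j then centered t else 1)).
have prod_if1 (a : 'I_n -> R) (m : 'I_n) : \prod_(l < n) (if l == m then a l else 1) = a m.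
  by rewrite -big_mkcond big_pred1_eq.
transitivity (\sum_y \prod_(l < n) F l (ev y l)).
  apply: eq_bigr => y _; rewrite /F !big_split /=.
  by rewrite (prod_if1 (fun l => centered (ev y l))) (prod_if1 (fun l => centered (ev y l))).
rewrite coords (bigD1 i) //= /F.
case: (eqVneq i j) => [<-|ij].
  rewrite [X in _ * X]big1 ?mulr1; first by apply: eq_bigr => t _; rewrite eqxx expr2.
  by move=> l /negbTE ->; under eq_bigr => t _ do rewrite !mulr1.
rewrite eqxx; suff -> : \sum_t p t * (centered t * 1) = 0 by rewrite mul0r.
under eq_bigr => t _ do rewrite mulr1 /centered mulrBr.
by rewrite sumrB -mulr_suml p1 mul1r subrr.
Qed.

Lemma iid_second_moment :
  \sum_y iid_law y * (\sum_(i < n) centered (ev y i)) ^+ 2 = n%:R * variance.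
Proof.
have E y : iid_law y * (\sum_(i < n) centered (ev y i)) ^+ 2 =
    \sum_(i < n) \sum_(j < n) iid_law y * (centered (ev y i) * centered (ev y j)).
  by rewrite expr2 mulr_suml mulr_sumr; apply: eq_bigr => i _; rewrite !mulr_sumr.
under eq_bigr => y _ do rewrite E.
rewrite exchange_big /=; under eq_bigr => i _ do rewrite exchange_big /=.
under eq_bigr => i _ do under eq_bigr => j _ do rewrite iid_cross_moment.
transitivity (\sum_(i < n) variance); last by rewrite sumr_const card_ord mulr_natl.
apply: eq_bigr => i _; rewrite (bigD1 i) //= eqxx big1 ?addr0 // => j /negbTE ji.
by rewrite eq_sym ji.
Qed.

Lemma iid_chebyshev (f : Y -> R) (eta : R) : 0 < eta -> (0 < n)%N ->
  (forall y, 0 < iid_law y -> f y = n%:R^-1 * \sum_(i < n) centered (ev y i)) ->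
  \sum_(y | ~~ (`|f y| <= eta)) iid_law y <= variance / (n%:R * eta ^+ 2).
Proof.
move=> eta0 n0 fE.
have n0R : 0 < (n%:R : R) by rewrite ltr0n.
have d0 : 0 < n%:R ^+ 2 * eta ^+ 2 :> R by rewrite mulr_gt0 // exprn_gt0.
apply: (@le_trans _ _ (\sum_y iid_law y * (\sum_(i < n) centered (ev y i)) ^+ 2 /
                        (n%:R ^+ 2 * eta ^+ 2))); last first.
  rewrite -mulr_suml iid_second_moment.
  have -> : n%:R * variance / (n%:R ^+ 2 * eta ^+ 2) = variance / (n%:R * eta ^+ 2).
    by field; rewrite (gt_eqF n0R) (gt_eqF eta0).
  exact: lexx.
rewrite [X in X <= _]big_mkcond; apply: ler_sum => y _.
have := iid_law_ge0 y; case: ifP => [far|_ _]; last first.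
  by rewrite divr_ge0 ?(ltW d0) // mulr_ge0 ?sqr_ge0 ?iid_law_ge0.
rewrite le0r => /predU1P[->|Ppos]; first by rewrite !mul0r.
move: far; rewrite (fE y Ppos) -ltNge; set S := \sum_(i < n) _ => far.
have -> : iid_law y * S ^+ 2 / (n%:R ^+ 2 * eta ^+ 2) =
          iid_law y * ((n%:R^-1 * S) ^+ 2 / eta ^+ 2).
  by field; rewrite (gt_eqF n0R) (gt_eqF eta0).
rewrite ler_pMr // ler_pdivlMr ?exprn_gt0 // mul1r.
rewrite -(real_normK (num_real (n%:R^-1 * S))) !expr2.
set u := `|_| in far *; nra.
Qed.

End IidLaw.

(* A plaintext [x ~ P] is encrypted as [Phi k x] under an independent key
   [k ~ Q].  On [A] the plaintext is determined by the ciphertext, its side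
   information [sx x] and the key part [kp k].  Logarithms are natural here:
   [\sum_x P x * divergence x] is [ln 2] times the leakage. *)
Section Converse.
Variables (R : realType) (X K C Z L : finType).
Variables (P : X -> R) (Q : K -> R) (Phi : K -> X -> C).
Variables (sx : X -> Z) (kp : K -> L) (Pz : Z -> R) (A : pred X).
Hypotheses (P0 : forall x, 0 <= P x) (P1 : \sum_x P x = 1).
Hypotheses (Q0 : forall k, 0 <= Q k) (Q1 : \sum_k Q k = 1).
Hypotheses (Pz0 : forall z, 0 <= Pz z) (Pz1 : \sum_z Pz z <= 1).
Hypotheses (PA : forall x, A x -> 0 < P x) (PzA : forall x, A x -> 0 < Pz (sx x)).
Hypothesis decodable : forall x x' k k', A x -> A x' -> sx x = sx x' -> kp k = kp k' ->
  Phi k x = Phi k' x' -> x = x'.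

Definition hit k x c : R := ((Phi k x == c) : nat)%:R.
Definition key_part_law m := \sum_(k | kp k == m) Q k.
Definition channel c x := \sum_k Q k * hit k x c.
Definition channel_part m x c := \sum_(k | kp k == m) Q k * hit k x c.
Definition output c := \sum_x P x * channel c x.
Definition good_mass := \sum_(x | A x) P x.
Definition divergence x := \sum_c channel c x * (ln (channel c x) - ln (output c)).

Lemma hit_ge0 k x c : 0 <= hit k x c.
Proof. by rewrite ler0n. Qed.

Lemma sum_hit k x : \sum_c hit k x c = 1.
Proof.
rewrite (bigD1 (Phi k x)) //= /hit eqxx big1 ?addr0 // => c /negbTE.
by rewrite eq_sym => ->.
Qed.

Lemma channel_ge0 c x : 0 <= channel c x.
Proof. by apply: sumr_ge0 => k _; rewrite mulr_ge0 ?hit_ge0. Qed.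

Lemma sum_channel x : \sum_c channel c x = 1.
Proof.
rewrite /channel exchange_big /= -Q1; apply: eq_bigr => k _.
by rewrite -mulr_sumr sum_hit mulr1.
Qed.

Lemma output_ge0 c : 0 <= output c.
Proof. by apply: sumr_ge0 => x _; rewrite mulr_ge0 ?channel_ge0. Qed.

Lemma sum_output : \sum_c output c = 1.
Proof.
rewrite /output exchange_big /= -P1; apply: eq_bigr => x _.
by rewrite -mulr_sumr sum_channel mulr1.
Qed.

Lemma output_ge c x : P x * channel c x <= output c.
Proof.
rewrite /output (bigD1 x) //= lerDl.
by apply: sumr_ge0 => x' _; rewrite mulr_ge0 ?channel_ge0.
Qed.

Lemma key_part_law_ge0 m : 0 <= key_part_law m.
Proof. exact: sumr_ge0. Qed.

Lemma sum_key_part_law : \sum_m key_part_law m = 1.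
Proof. by rewrite -Q1 (partition_big kp xpredT). Qed.

Lemma divergence_ge0 x : 0 < P x -> 0 <= divergence x.
Proof.
move=> Px; rewrite /divergence -oppr_le0 -sumrN.
apply: (@le_trans _ _ (\sum_c (output c - channel c x))); last first.
  by rewrite sumrB sum_output sum_channel subrr.
apply: ler_sum => c _; have := channel_ge0 c x.
rewrite le0r => /predU1P[->|Wp]; first by rewrite mul0r oppr0 addr0 output_ge0.
have Op : 0 < output c by apply: lt_le_trans (mulr_gt0 Px Wp) (output_ge c x).
have H := ler_wpM2l (ltW Wp) (ln_le_subr1 (divr_gt0 Op Wp)).
rewrite -mulrN opprB -ln_div ?posrE //; apply: le_trans H _.
by rewrite mulrBr mulr1 mulrCA divff ?gt_eqF // mulr1.
Qed.

(* [log_ratio x c k] is the logarithm of [ratio x c k] with [channel_part]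
   enlarged to [channel], so [ln y <= y - 1] bounds it by [ratio x c k - 1];
   decodability enters only when the ratios are summed ([sum_ratio_le]). *)
Definition ratio x c k := good_mass * Pz (sx x) * key_part_law (kp k) * output c /
  (P x * channel_part (kp k) x c).

Definition log_ratio x c k := ln good_mass + ln (Pz (sx x)) - ln (P x) +
  ln (key_part_law (kp k)) + (ln (output c) - ln (channel c x)).

Lemma weighted_ln_le_ratio x c k : A x ->
  P x * Q k * hit k x c * log_ratio x c k <= P x * Q k * hit k x c * (ratio x c k - 1).
Proof.
move=> Ax; have [hitc|nhit] := eqVneq (Phi k x) c; last first.
  by rewrite /hit (negbTE nhit) mulr0 !mul0r.
have := Q0 k; rewrite le0r => /predU1P[->|Qkp]; first by rewrite mulr0 !mul0r.
have hit1 : hit k x c = 1 by rewrite /hit hitc eqxx.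
have Px := PA Ax.
have Q_le_part : Q k <= channel_part (kp k) x c.
  rewrite /channel_part (bigD1 k) //= hit1 mulr1 lerDl.
  by apply: sumr_ge0 => k' _; rewrite mulr_ge0 ?hit_ge0.
have part_le : channel_part (kp k) x c <= channel c x.
  rewrite /channel (bigID (fun k' => kp k' == kp k)) /= lerDl.
  by apply: sumr_ge0 => k' _; rewrite mulr_ge0 ?hit_ge0.
have Qkm : Q k <= key_part_law (kp k).
  by rewrite /key_part_law (bigD1 k) //= lerDl; apply: sumr_ge0.
have Px_le : P x <= good_mass.
  by rewrite /good_mass (bigD1 x) //= lerDl; apply: sumr_ge0.
have Vp : 0 < channel_part (kp k) x c by apply: lt_le_trans Qkp Q_le_part.
have Wp : 0 < channel c x by apply: lt_le_trans Vp part_le.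
have Op : 0 < output c by apply: lt_le_trans (mulr_gt0 Px Wp) (output_ge c x).
have mp : 0 < key_part_law (kp k) by apply: lt_le_trans Qkp Qkm.
have ap : 0 < good_mass by apply: lt_le_trans Px Px_le.
have zp := PzA Ax.
set num := good_mass * Pz (sx x) * key_part_law (kp k) * output c.
have nump : 0 < num by rewrite !mulr_gt0.
have -> : log_ratio x c k = ln (num / (P x * channel c x)).
  by rewrite /log_ratio ln_div ?posrE ?mulr_gt0 // !lnM ?posrE ?mulr_gt0 //; ring.
rewrite hit1 mulr1; apply: ler_wpM2l; first by rewrite mulr_ge0 // ltW.
apply: le_trans (ln_le_subr1 _); last by rewrite divr_gt0 ?mulr_gt0.
rewrite ler_ln ?posrE ?divr_gt0 ?mulr_gt0 //.
apply: ler_wpM2l; first exact: ltW.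
by rewrite lef_pV2 ?posrE ?mulr_gt0 // ler_wpM2l // ltW.
Qed.

Lemma channel_part_neq0 m x c : channel_part m x c != 0 -> exists2 k, kp k = m & Phi k x = c.
Proof.
move=> Vn0; have [/existsP [k /andP [/eqP km /eqP kc]] | none] :=
  boolP [exists k, (kp k == m) && (Phi k x == c)]; first by exists k.
move: Vn0; rewrite /channel_part big1 ?eqxx // => k km.
move: none; rewrite negb_exists => /forallP /(_ k); rewrite km /= => /negbTE kc.
by rewrite /hit kc mulr0.
Qed.

Lemma sum_side_decoded_le1 m c :
  \sum_(x | A x) Pz (sx x) * (channel_part m x c != 0)%:R <= 1.
Proof.
rewrite (eq_bigr (fun x => if channel_part m x c != 0 then Pz (sx x) else 0)); last first.
  by move=> x _; case: (channel_part m x c != 0); rewrite ?mulr1 ?mulr0.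
rewrite -big_mkcondr (partition_big sx xpredT) //=.
apply: le_trans Pz1; apply: ler_sum => z _.
rewrite (eq_bigr (fun _ => Pz z)); last by move=> x /andP [_ /eqP ->].
case: (pickP [pred x | (A x && (channel_part m x c != 0)) && (sx x == z)]) => [x0 Hx0|none]; last first.
  by rewrite big_pred0.
rewrite (eq_bigl (pred1 x0)) ?big_pred1_eq // => x /=; apply/idP/eqP => [Hx|->//].
case/andP: Hx => /andP [Ax /channel_part_neq0 [k km kc]] /eqP zx.
case/andP: Hx0 => /andP [Ax0 /channel_part_neq0 [k0 k0m k0c]] /eqP zx0.
by apply: (@decodable x x0 k k0 Ax Ax0); [rewrite zx zx0 | rewrite km k0m | rewrite kc k0c].
Qed.

Lemma sum_ratio_le :
  \sum_(x | A x) \sum_c \sum_k P x * Q k * hit k x c * ratio x c k <= good_mass.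
Proof.
have mul_div_indicator (v s : R) : v * (s / v) = s * (v != 0)%:R.
  by have [->|v0] := eqVneq v 0; rewrite ?mul0r ?mulr0 // mulr1 mulrCA divff ?mulr1.
have regroup x c : A x -> \sum_k P x * Q k * hit k x c * ratio x c k =
    \sum_m good_mass * (key_part_law m * output c *
                        (Pz (sx x) * (channel_part m x c != 0)%:R)).
  move=> Ax; have Pn0 : P x != 0 by rewrite gt_eqF // PA.
  rewrite (partition_big kp xpredT) //=; apply: eq_bigr => m _.
  transitivity (\sum_(k | kp k == m) Q k * hit k x c *
      (good_mass * Pz (sx x) * key_part_law m * output c / channel_part m x c)).
    apply: eq_bigr => k /eqP km; rewrite /ratio km invfM.
    by set w := (channel_part m x c)^-1; field.
  by rewrite -mulr_suml -/(channel_part m x c) mul_div_indicator; ring.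
under eq_bigr => x Ax do under eq_bigr => c _ do rewrite regroup //.
have total : \sum_c \sum_m good_mass * (key_part_law m * output c) = good_mass.
  rewrite -[RHS]mulr1 -sum_output mulr_sumr; apply: eq_bigr => c _.
  by rewrite -mulr_sumr -mulr_suml sum_key_part_law mul1r.
rewrite -[leRHS]total exchange_big /=; apply: ler_sum => c _; rewrite exchange_big /=.
apply: ler_sum => m _; rewrite -mulr_sumr; apply: ler_wpM2l; first exact: sumr_ge0.
rewrite -mulr_sumr -[leRHS]mulr1; apply: ler_wpM2l; last exact: sum_side_decoded_le1.
by rewrite mulr_ge0 ?key_part_law_ge0 ?output_ge0.
Qed.

Lemma sum_weighted_split x (a : R) (b : K -> R) (e : C -> R) :
  \sum_c \sum_k P x * Q k * hit k x c * (a + b k + e c) =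
  P x * a + P x * \sum_k Q k * b k + P x * \sum_c channel c x * e c.
Proof.
have E c k : P x * Q k * hit k x c * (a + b k + e c) =
    P x * a * (Q k * hit k x c) + P x * (Q k * b k) * hit k x c
    + P x * e c * (Q k * hit k x c) by ring.
under eq_bigr => c _ do under eq_bigr => k _ do rewrite E.
under eq_bigr => c _ do rewrite !big_split /=.
rewrite !big_split /=; congr (_ + _ + _).
- rewrite -[RHS]mulr1 -(sum_channel x) mulr_sumr; apply: eq_bigr => c _.
  by rewrite -mulr_sumr.
- rewrite exchange_big /= mulr_sumr; apply: eq_bigr => k _.
  by rewrite -mulr_sumr sum_hit mulr1.
- rewrite mulr_sumr; apply: eq_bigr => c _.
  by rewrite -mulr_sumr -/(channel c x); ring.
Qed.

Lemma sum_hit_weights x : \sum_c \sum_k P x * Q k * hit k x c = P x.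
Proof.
transitivity (\sum_c P x * channel c x); last by rewrite -mulr_sumr sum_channel mulr1.
by apply: eq_bigr => c _; rewrite /channel mulr_sumr; apply: eq_bigr => k _; rewrite mulrA.
Qed.

Lemma sum_weighted_log_ratio_le0 :
  \sum_(x | A x) \sum_c \sum_k P x * Q k * hit k x c * log_ratio x c k <= 0.
Proof.
apply: (@le_trans _ _ (\sum_(x | A x) \sum_c \sum_k
                        P x * Q k * hit k x c * (ratio x c k - 1))).
  by do 3!apply: ler_sum => ? ?; exact: weighted_ln_le_ratio.
have split1 x : \sum_c \sum_k P x * Q k * hit k x c * (ratio x c k - 1) =
    \sum_c \sum_k P x * Q k * hit k x c * ratio x c k - P x.
  transitivity (\sum_c \sum_k P x * Q k * hit k x c * ratio x c k -
                \sum_c \sum_k P x * Q k * hit k x c); last by rewrite sum_hit_weights.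
  rewrite -sumrB; apply: eq_bigr => c _.
  by rewrite -sumrB; apply: eq_bigr => k _; ring.
under eq_bigr => x _ do rewrite split1.
by rewrite sumrB subr_le0 sum_ratio_le.
Qed.

Lemma sum_weighted_log_ratioE :
  \sum_(x | A x) \sum_c \sum_k P x * Q k * hit k x c * log_ratio x c k =
  good_mass * ln good_mass + \sum_(x | A x) P x * (ln (Pz (sx x)) - ln (P x))
  + good_mass * \sum_m key_part_law m * ln (key_part_law m)
  - \sum_(x | A x) P x * divergence x.
Proof.
rewrite /log_ratio; under eq_bigr => x _ do rewrite (sum_weighted_split x
  (ln good_mass + ln (Pz (sx x)) - ln (P x)) (fun k => ln (key_part_law (kp k)))
  (fun c => ln (output c) - ln (channel c x))).
rewrite !big_split /=.
have -> : \sum_(x | A x) P x * (ln good_mass + ln (Pz (sx x)) - ln (P x)) =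
    good_mass * ln good_mass + \sum_(x | A x) P x * (ln (Pz (sx x)) - ln (P x)).
  by rewrite /good_mass mulr_suml -big_split /=; apply: eq_bigr => x _; ring.
have -> : \sum_(x | A x) P x * \sum_k Q k * ln (key_part_law (kp k)) =
    good_mass * \sum_m key_part_law m * ln (key_part_law m).
  rewrite -mulr_suml (partition_big kp xpredT) //=; congr (_ * _).
  by apply: eq_bigr => m _; rewrite /key_part_law mulr_suml; apply: eq_bigr => k /eqP ->.
have -> : \sum_(x | A x) P x * \sum_c channel c x * (ln (output c) - ln (channel c x)) =
    - \sum_(x | A x) P x * divergence x.
  rewrite -sumrN; apply: eq_bigr => x _; rewrite /divergence -mulrN -sumrN.
  by congr (_ * _); apply: eq_bigr => c _; ring.
by [].
Qed.

Lemma converse_ineq :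
  good_mass * ln good_mass + \sum_(x | A x) P x * (ln (Pz (sx x)) - ln (P x))
  + good_mass * \sum_m key_part_law m * ln (key_part_law m)
  <= \sum_(x | A x) P x * divergence x.
Proof. by rewrite -subr_le0 -sum_weighted_log_ratioE sum_weighted_log_ratio_le0. Qed.

Lemma sum_good_divergence_le :
  \sum_(x | A x) P x * divergence x <= \sum_x P x * divergence x.
Proof.
rewrite [leRHS](bigID A) /= lerDl; apply: sumr_ge0 => x _.
have /predU1P[->|Px] : (P x == 0) || (0 < P x) by rewrite -le0r.
  by rewrite mul0r.
by rewrite mulr_ge0 ?divergence_ge0 ?ltW.
Qed.

Lemma converse_bound (n : nat) (H Hk g d b : R) : (0 < n)%N ->
  \sum_m key_part_law m * ln (key_part_law m) = - (n%:R * ln 2 * Hk) ->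
  (forall x, A x -> n%:R * ln 2 * (H - g) <= ln (Pz (sx x)) - ln (P x)) ->
  \sum_x P x * divergence x <= ln 2 * d -> 0 <= d -> 0 < b -> b <= good_mass ->
  H <= Hk + g + n%:R^-1 * (d / b + log2 (1 / b)).
Proof.
move=> n0 HK typ leak d0 b0 b_le.
apply: (le_entropy_of_ln_ineq b0 b_le _ d0); first by rewrite ltr0n.
rewrite -HK; apply: le_trans leak; apply: le_trans sum_good_divergence_le.
apply: le_trans converse_ineq; rewrite lerD2r lerD2l /good_mass mulr_suml.
by apply: ler_sum => x Ax; apply: ler_wpM2l; [exact: P0 | exact: typ].
Qed.

End Converse.

Section EntropyLn.
Variables (R : realType) (T : finType) (r : T -> R).
Hypotheses (r0 : forall t, 0 <= r t) (r1 : \sum_t r t = 1).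

Lemma sum_ln_entropy : \sum_t r t * ln (r t) = - (ln 2 * entropy r).
Proof.
have L0 : ln 2 != 0 :> R by rewrite gt_eqF ?ln2_gt0.
rewrite /entropy mulrN opprK mulr_sumr; apply: eq_bigr => t _.
by rewrite /log2; field.
Qed.

Lemma sum_pn n : \sum_(y : sq T n) pn r y = 1.
Proof. exact: (sum_iid_law (@product_coords_seq R T n) r1). Qed.

Lemma sum_pn_ln n :
  \sum_(y : sq T n) pn r y * ln (pn r y) = - (n%:R * ln 2 * entropy r).
Proof.
by rewrite (sum_iid_law_ln (@product_coords_seq R T n) r0 r1) sum_ln_entropy mulrN mulrA.
Qed.

End EntropyLn.

Section Marginals.
Variables (R : realType) (X1 X2 : finType) (r : X1 * X2 -> R).
Hypotheses (r0 : forall t, 0 <= r t) (r1 : \sum_t r t = 1).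

Lemma marg1_ge0 a : 0 <= marg1 r a.
Proof. exact: sumr_ge0. Qed.

Lemma marg2_ge0 b : 0 <= marg2 r b.
Proof. exact: sumr_ge0. Qed.

Lemma sum_marg1 : \sum_a marg1 r a = 1.
Proof. by rewrite -r1 /marg1 (pair_bigA _ (fun a b => r (a, b))); apply: eq_bigr => -[]. Qed.

Lemma sum_marg2 : \sum_b marg2 r b = 1.
Proof.
rewrite -r1 /marg2 exchange_big /= (pair_bigA _ (fun a b => r (a, b))).
by apply: eq_bigr => -[].
Qed.

Lemma le_marg1 t : r t <= marg1 r t.1.
Proof. by case: t => a b; rewrite /marg1 (bigD1 b) //= lerDl; apply: sumr_ge0. Qed.

Lemma le_marg2 t : r t <= marg2 r t.2.
Proof. by case: t => a b; rewrite /marg2 (bigD1 a) //= lerDl; apply: sumr_ge0. Qed.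

Lemma pmf_le1 t : r t <= 1.
Proof. by rewrite -r1 (bigD1 t) //= lerDl; apply: sumr_ge0. Qed.

Lemma centropy12_mean : centropy12 r = mean r (fun t => - log2 (r t / marg2 r t.2)).
Proof. by rewrite /centropy12 /mean -sumrN; apply: eq_bigr => t _; rewrite mulrN. Qed.

Lemma centropy21_mean : centropy21 r = mean r (fun t => - log2 (r t / marg1 r t.1)).
Proof. by rewrite /centropy21 /mean -sumrN; apply: eq_bigr => t _; rewrite mulrN. Qed.

Variable n : nat.
Local Notation Xn := (sq X1 n * sq X2 n)%type.

Lemma pjn_ge0 (x : Xn) : 0 <= pjn r x.
Proof. exact: prodr_ge0. Qed.

Lemma sum_pjn : \sum_(x : Xn) pjn r x = 1.
Proof. exact: (sum_iid_law (@product_coords_pair R X1 X2 n) r1). Qed.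

Lemma sum_pjn_marg1 (x1 : sq X1 n) : \sum_(x2 : sq X2 n) pjn r (x1, x2) = pn (marg1 r) x1.
Proof.
rewrite /pjn /pn /marg1 /=.
transitivity (\big[GRing.mul/1]_(i < n) \big[GRing.add/0]_(b : X2) r (x1 i, b)); last by [].
by rewrite bigA_distr_bigA.
Qed.

Lemma sum_pjn_marg2 (x2 : sq X2 n) : \sum_(x1 : sq X1 n) pjn r (x1, x2) = pn (marg2 r) x2.
Proof.
rewrite /pjn /pn /marg2 /=.
transitivity (\big[GRing.mul/1]_(i < n) \big[GRing.add/0]_(a : X1) r (a, x2 i)); last by [].
by rewrite bigA_distr_bigA.
Qed.

Lemma pjn_le1 (x : Xn) : pjn r x <= 1.
Proof.
rewrite -sum_pjn (bigD1 x) //= lerDl.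
by apply: sumr_ge0 => y _; apply: pjn_ge0.
Qed.

Lemma pjn_le_marg1 (x : Xn) : pjn r x <= pn (marg1 r) x.1.
Proof.
case: x => x1 x2; rewrite -sum_pjn_marg1 (bigD1 x2) //= lerDl.
by apply: sumr_ge0 => y _; apply: pjn_ge0.
Qed.

Lemma pjn_le_marg2 (x : Xn) : pjn r x <= pn (marg2 r) x.2.
Proof.
case: x => x1 x2; rewrite -sum_pjn_marg2 (bigD1 x1) //= lerDl.
by apply: sumr_ge0 => y _; apply: pjn_ge0.
Qed.

Lemma sum_pjn_ln : \sum_(x : Xn) pjn r x * ln (pjn r x) = - (n%:R * ln 2 * entropy r).
Proof.
rewrite (sum_iid_law_ln (@product_coords_pair R X1 X2 n) r0 r1) sum_ln_entropy.
by rewrite mulrN mulrA.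
Qed.

End Marginals.

Lemma typical_ln_ratio (R : realType) n (a b H g : R) : (0 < n)%N -> 0 < a -> 0 < b ->
  `|n%:R^-1 * log2 (1 / (a / b)) - H| <= g -> n%:R * ln 2 * (H - g) <= ln b - ln a.
Proof.
move=> n0 a0 b0; have L0 := ln2_gt0 R; have n0R : 0 < n%:R :> R by rewrite ltr0n.
rewrite div1r invf_div /log2 ln_div ?posrE // ler_norml => /andP [lo _].
have -> : ln b - ln a = n%:R * ln 2 * (n%:R^-1 * ((ln b - ln a) / ln 2)).
  by field; rewrite !gt_eqF.
by apply: ler_wpM2l; [rewrite mulr_ge0 ?ltW | lra].
Qed.

Section System.
Variables (R : realType) (X1 X2 : finType) (n : nat) (S : system X1 X2 n).
Variables (p q : X1 * X2 -> R).
Hypotheses (p0 : forall t, 0 <= p t) (p1 : \sum_t p t = 1).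
Hypotheses (q0 : forall t, 0 <= q t) (q1 : \sum_t q t = 1).
Local Notation Xn := (sq X1 n * sq X2 n)%type.
Local Notation P := (pjn (n:=n) p).
Local Notation Q := (pjn (n:=n) q).

Definition encrypt (k x : Xn) : C1 S * C2 S := (Phi1 S k.1 x.1, Phi2 S k.2 x.2).

Lemma ln2_leakage : ln 2 * leakage p q S = \sum_x P x * divergence P Q encrypt x.
Proof.
set J := cipher_joint p q (S:=S).
have JE c x : J (c, x) = P x * channel Q encrypt c x by [].
have J2 x : marg2 J x = P x.
  rewrite /marg2 (eq_bigr (fun c => P x * channel Q encrypt c x)) // -mulr_sumr.
  by rewrite sum_channel ?mulr1 // sum_pjn.
have J1 c : marg1 J c = output P Q encrypt c by [].
rewrite /leakage /minfo -/J -(pair_bigA _ (fun c x => J (c, x) *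
   log2 (J (c, x) / (marg1 J c * marg2 J x)))) /=.
rewrite exchange_big /= mulr_sumr; apply: eq_bigr => x _.
rewrite /divergence !mulr_sumr; apply: eq_bigr => c _.
rewrite JE J1 J2.
have /predU1P[->|Px] : (P x == 0) || (0 < P x) by rewrite -le0r pjn_ge0.
  by rewrite !mul0r mulr0.
have /predU1P[->|Wp] : (channel Q encrypt c x == 0) || (0 < channel Q encrypt c x).
  by rewrite -le0r channel_ge0 // => k; apply: pjn_ge0.
  by rewrite !(mulr0, mul0r).
have Op : 0 < output P Q encrypt c.
  by apply: lt_le_trans (mulr_gt0 Px Wp) _; apply: output_ge => ?; apply: pjn_ge0.
rewrite /log2 ln_div ?posrE ?mulr_gt0 // !lnM ?posrE //.
by field; rewrite gt_eqF ?ln2_gt0.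
Qed.

Definition decoded (x : Xn) := psi (s:=S) (phi1 S x.1) (phi2 S x.2) == x.

(* The decoder's output does not depend on the keys, so two decodable
   plaintexts can both be decoded with the same key [k]. *)
Lemma decoded_encrypt k x : decoded x -> Psi (s:=S) k.1 k.2 (encrypt k x).1 (encrypt k x).2 = x.
Proof. by move=> /eqP dx; rewrite /= factor. Qed.

Lemma encrypt_inj x x' k : decoded x -> decoded x' -> encrypt k x = encrypt k x' -> x = x'.
Proof. by move=> dx dx' E; rewrite -(decoded_encrypt k dx) -(decoded_encrypt k dx') E. Qed.

Lemma encrypt_inj_key1 x x' k k' : decoded x -> decoded x' -> x.2 = x'.2 -> k.1 = k'.1 ->
  encrypt k x = encrypt k' x' -> x = x'.
Proof.
move=> dx dx' e2 e1 [E1 _]; rewrite -(decoded_encrypt k dx) -(decoded_encrypt k dx') /=.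
by rewrite E1 -e1 e2.
Qed.

Lemma encrypt_inj_key2 x x' k k' : decoded x -> decoded x' -> x.1 = x'.1 -> k.2 = k'.2 ->
  encrypt k x = encrypt k' x' -> x = x'.
Proof.
move=> dx dx' e1 e2 [_ E2]; rewrite -(decoded_encrypt k dx) -(decoded_encrypt k dx') /=.
by rewrite E2 -e2 e1.
Qed.

Lemma key_part_law_fst (k1 : sq X1 n) : key_part_law Q fst k1 = pn (marg1 q) k1.
Proof.
rewrite -sum_pjn_marg1 /key_part_law.
rewrite (eq_bigl (fun k : Xn => (k.1 == k1) && xpredT k.2)) => [|k]; last by rewrite andbT.
by rewrite -(pair_big (fun a => a == k1) xpredT (fun a b => Q (a, b))) /= big_pred1_eq.
Qed.

Lemma key_part_law_snd (k2 : sq X2 n) : key_part_law Q snd k2 = pn (marg2 q) k2.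
Proof.
rewrite -sum_pjn_marg2 /key_part_law.
rewrite (eq_bigl (fun k : Xn => xpredT k.1 && (k.2 == k2))) //.
rewrite -(pair_big xpredT (fun b => b == k2) (fun a b => Q (a, b))) /=.
by apply: eq_bigr => a _; rewrite big_pred1_eq.
Qed.

Lemma key_part_law_id (k : Xn) : key_part_law Q id k = Q k.
Proof. exact: big_pred1_eq. Qed.

Definition good gamma := [pred x : Xn | typical p gamma x && decoded x && (0 < P x)].

Lemma good_mass_ge gamma : 1 - nu p n gamma - perr p S <= good_mass P (good gamma).
Proof.
have split_good : \sum_x P x = good_mass P (good gamma) + \sum_(x | ~~ good gamma x) P x.
  exact: bigID.
have bad : \sum_(x | ~~ good gamma x) P x <= nu p n gamma + perr p S.
  rewrite /nu /perr big_mkcond [X in _ <= X + _]big_mkcond [X in _ <= _ + X]big_mkcond.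
  rewrite -big_split /=; apply: ler_sum => x _; have := pjn_ge0 p0 x.
  by rewrite /good /decoded /=; case: typical; case: eqP; case: ltrP => /= ? ?; lra.
move: split_good bad; rewrite sum_pjn //; lra.
Qed.

Lemma block_converse (Z L : finType) (sx : Xn -> Z) (kp : Xn -> L) (Pz : Z -> R)
    (H Hk gamma delta b : R) :
  (forall z, 0 <= Pz z) -> \sum_z Pz z <= 1 -> (forall x, P x <= Pz (sx x)) ->
  (forall x x' k k', decoded x -> decoded x' -> sx x = sx x' -> kp k = kp k' ->
     encrypt k x = encrypt k' x' -> x = x') ->
  (forall x, typical p gamma x -> `|n%:R^-1 * log2 (1 / (P x / Pz (sx x))) - H| <= gamma) ->
  \sum_m key_part_law Q kp m * ln (key_part_law Q kp m) = - (n%:R * ln 2 * Hk) ->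
  (0 < n)%N -> leakage p q S <= delta -> 0 <= delta ->
  0 < b -> b <= 1 - nu p n gamma - perr p S ->
  H <= Hk + gamma + n%:R^-1 * (delta / b + log2 (1 / b)).
Proof.
move=> Pz0 Pz1 P_le dec typ HK n0 leak d0 b0 b_le.
have PA x : good gamma x -> 0 < P x by case/andP.
have PzA x : good gamma x -> 0 < Pz (sx x) by move/PA/lt_le_trans; apply.
have decA x x' k k' : good gamma x -> good gamma x' -> sx x = sx x' -> kp k = kp k' ->
    encrypt k x = encrypt k' x' -> x = x'.
  by move=> /andP[/andP[_ dx] _] /andP[/andP[_ dx'] _]; exact: dec.
have typA x : good gamma x -> n%:R * ln 2 * (H - gamma) <= ln (Pz (sx x)) - ln (P x).
  move=> gx; have /andP[/andP[tx _] Px] := gx.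
  exact: typical_ln_ratio n0 Px (PzA x gx) (typ x tx).
have div : \sum_x P x * divergence P Q encrypt x <= ln 2 * delta.
  by rewrite -ln2_leakage ler_wpM2l // ltW ?ln2_gt0.
exact: (converse_bound (pjn_ge0 (n:=n) p0) (sum_pjn p1 n) (pjn_ge0 (n:=n) q0) (sum_pjn q1 n)
  Pz0 Pz1 PA PzA decA n0 HK typA div d0 b0 (le_trans b_le (good_mass_ge gamma))).
Qed.

Lemma block_bounds (eps delta gamma : R) : (0 < n)%N -> 0 <= delta ->
  perr p S <= eps -> leakage p q S <= delta -> nu_eps p n gamma eps < 1 ->
  [/\ centropy12 p <= entropy (marg1 q) + gamma + zeta p n gamma eps delta,
      centropy21 p <= entropy (marg2 q) + gamma + zeta p n gamma eps delta &
      entropy p <= entropy q + gamma + zeta p n gamma eps delta].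
Proof.
move=> n0 d0 err leak nu_lt1; rewrite /zeta.
have b0 : 0 < 1 - nu_eps p n gamma eps by rewrite subr_gt0.
have b_le : 1 - nu_eps p n gamma eps <= 1 - nu p n gamma - perr p S by rewrite /nu_eps; lra.
split.
- apply: (@block_converse (sq X2 n) (sq X1 n) snd fst (pn (n:=n) (marg2 p))) => //.
  + by move=> z; apply: prodr_ge0 => i _; apply: marg2_ge0.
  + by rewrite (sum_pn (sum_marg2 p1)).
  + exact: pjn_le_marg2.
  + by move=> x x' k k' dx dx' e2 e1; apply: encrypt_inj_key1.
  + by move=> x /and3P[].
  + under eq_bigr do rewrite key_part_law_fst.
    by apply: sum_pn_ln; [exact: marg1_ge0 | exact: sum_marg1].
- apply: (@block_converse (sq X1 n) (sq X2 n) fst snd (pn (n:=n) (marg1 p))) => //.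
  + by move=> z; apply: prodr_ge0 => i _; apply: marg1_ge0.
  + by rewrite (sum_pn (sum_marg1 p1)).
  + exact: pjn_le_marg1.
  + by move=> x x' k k' dx dx' e1 e2; apply: encrypt_inj_key2.
  + by move=> x /and3P[].
  + under eq_bigr do rewrite key_part_law_snd.
    by apply: sum_pn_ln; [exact: marg2_ge0 | exact: sum_marg2].
- apply: (@block_converse unit Xn (fun _ => tt) id (fun _ => 1)) => //.
  + by rewrite (eq_bigr (fun _ => 1)) // sumr_const card_unit.
  + exact: pjn_le1.
  + by move=> x x' k k' dx dx' _ /= <-; apply: encrypt_inj.
  + by move=> x /and3P[_ _]; rewrite divr1.
  + under eq_bigr do rewrite key_part_law_id.
    exact: sum_pjn_ln.
Qed.

End System.

Section Typicality.
Variables (R : realType) (X1 X2 : finType) (p : X1 * X2 -> R).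
Hypotheses (p0 : forall t, 0 <= p t) (p1 : \sum_t p t = 1).

Definition info_variance :=
  variance p (fun t => - log2 (p t / marg2 p t.2)) +
  variance p (fun t => - log2 (p t / marg1 p t.1)) +
  variance p (fun t => - log2 (p t / 1)).

Section BlockLength.
Variable n : nat.
Local Notation Xn := (sq X1 n * sq X2 n)%type.

Lemma atypical_mass_le (r : X1 * X2 -> R) (H eta : R) (f : Xn -> R) :
  (forall t, p t <= r t) -> H = mean p (fun t => - log2 (p t / r t)) ->
  0 < eta -> (0 < n)%N ->
  (forall x, 0 < pjn p x ->
     f x = n%:R^-1 * log2 (1 / (pjn p x / \prod_(i < n) r (x.1 i, x.2 i))) - H) ->
  \sum_(x | ~~ (`|f x| <= eta)) pjn p x <=
    variance p (fun t => - log2 (p t / r t)) / (n%:R * eta ^+ 2).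
Proof.
move=> pr HE eta0 n0 fE.
apply: (iid_chebyshev (@product_coords_pair R X1 X2 n) p0 p1 eta0 n0) => x Px.
rewrite fE // (log2_inv_iid_ratio p0 pr Px) HE /centered sumrB sumr_const card_ord.
by rewrite mulrBr; congr (_ - _); field; rewrite pnatr_eq0 -lt0n.
Qed.

Lemma nu_le (eta : R) : 0 < eta -> (0 < n)%N -> nu p n eta <= info_variance / (n%:R * eta ^+ 2).
Proof.
move=> eta0 n0.
have bad1 := atypical_mass_le (le_marg2 p0) (centropy12_mean p) eta0 n0
  (f := fun x => n%:R^-1 * log2 (1 / (pjn p x / pn (marg2 p) x.2)) - centropy12 p)
  (fun _ _ => erefl).
have bad2 := atypical_mass_le (le_marg1 p0) (centropy21_mean p) eta0 n0
  (f := fun x => n%:R^-1 * log2 (1 / (pjn p x / pn (marg1 p) x.1)) - centropy21 p)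
  (fun _ _ => erefl).
have entropy_mean1 : entropy p = mean p (fun t => - log2 (p t / 1)).
  by rewrite /entropy /mean -sumrN; apply: eq_bigr => t _; rewrite divr1 mulrN.
have bad3 : \sum_(x : Xn | ~~ (`|n%:R^-1 * log2 (1 / pjn p x) - entropy p| <= eta)) pjn p x
    <= variance p (fun t => - log2 (p t / 1)) / (n%:R * eta ^+ 2).
  apply: (atypical_mass_le (pmf_le1 p0 p1) entropy_mean1 eta0 n0) => x _.
  by rewrite big1_eq divr1.
have ind3 (a b c : bool) (v : R) : 0 <= v ->
    (if ~~ [&& a, b & c] then v else 0) <=
    (if ~~ a then v else 0) + (if ~~ b then v else 0) + (if ~~ c then v else 0).
  by case: a; case: b; case: c => /= v0; lra.
rewrite /info_variance !mulrDl; apply: le_trans (lerD (lerD bad1 bad2) bad3).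
rewrite /nu big_mkcond [X in _ <= X + _ + _]big_mkcond [X in _ <= _ + X + _]big_mkcond.
rewrite [X in _ <= _ + X]big_mkcond -!big_split /=; apply: ler_sum => x _.
by apply: ind3; apply: pjn_ge0.
Qed.

End BlockLength.

Lemma nu_eps_lt1_eventually (gamma eps : R) : 0 < gamma -> eps < 1 ->
  exists N, forall n, (N <= n)%N -> nu_eps p n gamma eps < 1.
Proof.
move=> gamma0 eps1; have c0 : 0 < gamma ^+ 2 * (1 - eps) by rewrite mulr_gt0 ?exprn_gt0 ?subr_gt0.
exists (Num.Def.trunc (info_variance / (gamma ^+ 2 * (1 - eps)))).+1 => n Nn.
have n0 : (0 < n)%N by apply: leq_trans Nn.
have a0 : 0 < n%:R * gamma ^+ 2 :> R by rewrite mulr_gt0 ?exprn_gt0 ?ltr0n.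
have Vlt : info_variance < n%:R * gamma ^+ 2 * (1 - eps).
  rewrite -mulrA -ltr_pdivrMr //; apply: lt_le_trans (truncnS_gt _) _.
  by rewrite ler_nat.
have := nu_le gamma0 n0; rewrite ler_pdivlMr // /nu_eps => nuV.
set a := n%:R * gamma ^+ 2 in a0 Vlt nuV; nra.
Qed.

End Typicality.

Theorem proposition1 (R : realType) (X1 X2 : finFieldType)
    (p q : X1 * X2 -> R) (delta0 eps delta : R) :
  is_pmf p -> is_pmf q -> 0 < delta0 ->
  0 < eps -> eps < 1 -> 0 < delta -> delta <= delta0 ->
  (exists R1 R2 : R, rate_region p q eps delta R1 R2) ->
  forall gamma : R, 0 < gamma -> exists n0 : nat, forall n : nat, (n0 <= n)%N ->
    [/\ centropy12 p <= entropy (marg1 q) + gamma + zeta p n gamma eps delta,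
        centropy21 p <= entropy (marg2 q) + gamma + zeta p n gamma eps delta &
        entropy p <= entropy q + gamma + zeta p n gamma eps delta].
Proof.
move=> [p0 p1] [q0 q1] _ _ eps1 delta_gt0 _ [R1 [R2 [sys Hsys]]] gamma gamma0.
have [n1 Hn1] := Hsys 1 ltr01.
have [N HN] := nu_eps_lt1_eventually p0 p1 gamma0 eps1.
exists (maxn 1 (maxn n1 N)) => n; rewrite !geq_max => /and3P [n0 n1n Nn].
have [_ _ err leak] := Hn1 n n1n.
by apply: (block_bounds p0 p1 q0 q1 n0 (ltW delta_gt0) err leak); apply: HN.
Qed.
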